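(* There exist a binary matrix $A$ and two binary column vectors $x,y$ such that $R_{bool}(A|x)=R_{bool}(A|y)=R_{bool}(A)$, but $R_{bool}(A|x,y)>R_{bool}(A)$.
   Context: For a binary $n\times m$ matrix $A$, $R_{bool}(A)$ is the least $k$ such that $A=UV$ with $U\in\{0,1\}^{n\times k}$, $V\in\{0,1\}^{k\times m}$ and the product computed in the Boolean semiring ($1+1=1$). $(A|x_1,\dots,x_t)$ denotes $A$ with columns $x_1,\dots,x_t$ appended on the right. *)

From mathcomp Require Import all_boot all_algebra.
Set Implicit Arguments. Unset Strict Implicit. Unset Printing Implicit Defensive.

Definition bool_mulmx (n k m : nat) (U : 'M[bool]_(n, k)) (V : 'M[bool]_(k, m))
  : 'M[bool]_(n, m) :=
  \matrix_(i < n, j < m) [exists l : 'I_k, U i l && V l j].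

Definition bool_factorizable (n m : nat) (A : 'M[bool]_(n, m)) (k : nat) : Prop :=
  exists (U : 'M[bool]_(n, k)) (V : 'M[bool]_(k, m)), A = bool_mulmx U V.

Lemma bool_factorizable_dec n m (A : 'M[bool]_(n, m)) k :
  decidable (bool_factorizable A k).
Proof.
case: (pickP (fun UV : 'M[bool]_(n, k) * 'M[bool]_(k, m) => A == bool_mulmx UV.1 UV.2)).
  by move=> [U V] /eqP /= ->; left; exists U, V.
by move=> H; right=> -[U [V E]]; move: (H (U, V)); rewrite /= E eqxx.
Qed.

Definition bool_factorizableb n m (A : 'M[bool]_(n, m)) : pred nat :=
  fun k => if bool_factorizable_dec A k then true else false.

Lemma bool_factorizableP n m (A : 'M[bool]_(n, m)) k :
  reflect (bool_factorizable A k) (bool_factorizableb A k).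
Proof. by rewrite /bool_factorizableb; case: bool_factorizable_dec => H; constructor. Qed.

Lemma bool_factorizable_ex n m (A : 'M[bool]_(n, m)) :
  exists k, bool_factorizableb A k.
Proof.
exists n; apply/bool_factorizableP; exists (\matrix_(i < n, j < n) (i == j))%R, A.
apply/matrixP=> i j; rewrite /bool_mulmx mxE.
apply/idP/existsP => [Hj|[l]].
  by exists i; rewrite !mxE eqxx.
by rewrite !mxE; case: eqP => [<-|].
Qed.

Definition rbool n m (A : 'M[bool]_(n, m)) : nat := ex_minn (bool_factorizable_ex A).

Definition append1 n m (A : 'M[bool]_(n, m)) (x : 'cV[bool]_n) : 'M[bool]_(n, m + 1) :=
  row_mx A x.
Definition append2 n m (A : 'M[bool]_(n, m)) (x y : 'cV[bool]_n) : 'M[bool]_(n, m + 2) :=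
  row_mx A (row_mx x y).

From mathcomp Require Import all_boot all_algebra.
Set Implicit Arguments. Unset Strict Implicit. Unset Printing Implicit Defensive.

(* If M = U V over the Boolean semiring with inner dimension k, then column j of
   M is the join of the columns of U selected by column j of V, so M has at most
   2^k - 1 distinct nonzero columns.  For A = (1100 | 1111), x = 1011 and
   y = 0111, each of (A|x) and (A|y) is generated by the two columns 1100 and x
   (resp. y), so A, (A|x) and (A|y) all have Boolean rank 2; but (A|x,y) has four
   distinct nonzero columns, so its Boolean rank is at least 3. *)

Lemma rbool_factorizable n m (M : 'M[bool]_(n, m)) : bool_factorizable M (rbool M).
Proof. by rewrite /rbool; case: ex_minnP => k /bool_factorizableP. Qed.

Lemma rbool_min n m (M : 'M[bool]_(n, m)) k : bool_factorizable M k -> rbool M <= k.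
Proof. by move/bool_factorizableP; rewrite /rbool; case: ex_minnP => r _; apply. Qed.

Lemma col_bool_mulmx n k m (U : 'M[bool]_(n, k)) (V : 'M[bool]_(k, m)) j :
  col j (bool_mulmx U V) = bool_mulmx U (col j V).
Proof.
by apply/matrixP => i l; rewrite !mxE; apply: eq_existsb => l'; rewrite !mxE.
Qed.

Lemma lsubmx_bool_mulmx n k m1 m2 (U : 'M[bool]_(n, k)) (V : 'M[bool]_(k, m1 + m2)) :
  lsubmx (bool_mulmx U V) = bool_mulmx U (lsubmx V).
Proof.
by apply/matrixP => i j; rewrite !mxE; apply: eq_existsb => l; rewrite !mxE.
Qed.

Lemma bool_mulmx0 n k m (U : 'M[bool]_(n, k)) : bool_mulmx U (0 : 'M_(k, m))%R = 0%R.
Proof.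
by apply/matrixP => i j; rewrite !mxE; apply/negbTE/existsP => -[l]; rewrite mxE andbF.
Qed.

Lemma rbool_row_mxl n m1 m2 (A : 'M[bool]_(n, m1)) (B : 'M[bool]_(n, m2)) :
  rbool A <= rbool (row_mx A B).
Proof.
have [U [V defAB]] := rbool_factorizable (row_mx A B).
by apply: rbool_min; exists U, (lsubmx V); rewrite -lsubmx_bool_mulmx -defAB row_mxKl.
Qed.

Lemma ncols_lt_exp_factorizable n m (M : 'M[bool]_(n, m)) k :
  bool_factorizable M k -> injective (fun j => col j M) ->
  (forall j, col j M != 0%R) -> m < 2 ^ k.
Proof.
move=> [U [V ->]] injM nzM.
have injV : injective (fun j => col j V).
  by move=> j j' eqV; apply: injM; rewrite /= !col_bool_mulmx eqV.
have nzV : [set col j V | j : 'I_m] \subset [set~ 0%R].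
  apply/subsetP => _ /imsetP[j _ ->]; rewrite !inE.
  by apply: contraNneq (nzM j) => V0; rewrite col_bool_mulmx V0 bool_mulmx0.
rewrite -[m in m < _]card_ord -(card_imset _ injV).
apply: leq_ltn_trans (subset_leq_card nzV) _.
by rewrite cardsC1 card_mx card_bool muln1 ltn_predL expn_gt0.
Qed.

Lemma append1_mx n m (f : 'I_n -> nat -> bool) (z : 'cV[bool]_n) :
  append1 (\matrix_(i < n, j < m) f i j) z =
  (\matrix_(i < n, j < (m + 1)%N) if (j < m)%N then f i j else z i ord0)%R.
Proof.
apply/matrixP => i j; rewrite /append1 !mxE.
by case: splitP => [j' ->|k _]; rewrite ?mxE // [k]ord1.
Qed.

Lemma append2_mx n m (f : 'I_n -> nat -> bool) :
  append2 (\matrix_(i < n, j < m) f i j) (\col_i f i m) (\col_i f i m.+1) =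
  (\matrix_(i < n, j < (m + 2)%N) f i j)%R.
Proof.
apply/matrixP => i j; rewrite /append2 !mxE.
case: splitP => [j' ->|k ->]; first by rewrite mxE.
by rewrite mxE; case: splitP => [k' ->|k' ->]; rewrite mxE [k']ord1 ?addn0 ?addn1.
Qed.

Lemma existsb_ord2 (P : pred 'I_2) : [exists l, P l] = P ord0 || P ord_max.
Proof.
apply/existsP/orP => [[[[|[|//]] lt_l2] Pl]|[]]; [left|right|..]; last 2 first.
- by exists ord0.
- by exists ord_max.
all: by congr (P _): Pl; apply: val_inj.
Qed.

Definition Axy_entry (i j : nat) : bool :=
  match j with 0 => i < 2 | 1 => true | 2 => i != 1 | _ => i != 0 end.

Definition A : 'M[bool]_(4, 2) := \matrix_(i < 4, j < 2) Axy_entry i j.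
Definition x : 'cV[bool]_4 := \col_(i < 4) Axy_entry i 2.
Definition y : 'cV[bool]_4 := \col_(i < 4) Axy_entry i 3.

Lemma rbool_A_gt1 : 1 < rbool A.
Proof.
rewrite -(ltn_exp2l _ _ (ltnSn 1)).
apply: (ncols_lt_exp_factorizable (rbool_factorizable A)).
- move=> j j' /matrixP/(_ (inord 2) ord0); rewrite !mxE inordK // => eq_j.
  by apply/val_inj; case: j j' eq_j => -[|[|//]] ? [[|[|//]] ?].
- move=> j; apply/eqP => /matrixP/(_ (inord 1) ord0); rewrite !mxE inordK //.
  by case: j => -[|[|//]].
Qed.

Lemma append1_A_factorizable (z : 'cV[bool]_4) :
  (forall i : 'I_4, 1 < i -> z i ord0) -> bool_factorizable (append1 A z) 2.
Proof.
move=> z_low.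
exists (\matrix_(i < 4, l < 2) if l == 0 :> nat then (i < 2)%N else z i ord0)%R.
exists (\matrix_(l < 2, j < 3) if l == 0 :> nat then (j < 2)%N else (0 < j)%N)%R.
apply/matrixP => i j; rewrite /A (append1_mx _ (fun i => Axy_entry i)).
rewrite /bool_mulmx !mxE existsb_ord2 !mxE /=.
case: j => -[|[|[|//]]] _ /=; rewrite ?andbT ?andbF ?orbF //.
by case: ltnP => // /z_low.
Qed.

Lemma rbool_append1_A (z : 'cV[bool]_4) :
  (forall i : 'I_4, 1 < i -> z i ord0) -> rbool (append1 A z) = 2.
Proof.
move=> z_low; apply/anti_leq; rewrite (rbool_min (append1_A_factorizable z_low)).
exact: leq_trans rbool_A_gt1 (rbool_row_mxl _ _).
Qed.

Lemma rbool_Axy_gt2 : 2 < rbool (append2 A x y).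
Proof.
rewrite -(ltn_exp2l _ _ (ltnSn 1)) /A /x /y (append2_mx _ (fun i => Axy_entry i)).
apply: (ncols_lt_exp_factorizable (rbool_factorizable _)).
- move=> j j' /matrixP eq_col; apply/val_inj.
  have {eq_col} := (eq_col (inord 0) ord0, eq_col (inord 1) ord0, eq_col (inord 2) ord0).
  rewrite !mxE !inordK //.
  by case: j j' => -[|[|[|[|//]]]] ? [[|[|[|[|//]]]] ?] [[? ?] ?].
- move=> j; apply/eqP => /matrixP eq0.
  have {eq0} := (eq0 (inord 1) ord0, eq0 (inord 2) ord0); rewrite !mxE !inordK //.
  by case: j => -[|[|[|[|//]]]] ? [? ?].
Qed.

Theorem mainTheorem8 :
  exists (n m : nat) (A : 'M[bool]_(n, m)) (x y : 'cV[bool]_n),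
    rbool (append1 A x) = rbool A /\
    rbool (append1 A y) = rbool A /\
    rbool (append2 A x y) > rbool A.
Proof.
exists 4, 2, A, x, y.
have rAx : rbool (append1 A x) = 2.
  by apply: rbool_append1_A => -[[|[|[|[|//]]]] ?] // _; rewrite mxE.
have rAy : rbool (append1 A y) = 2.
  by apply: rbool_append1_A => -[[|[|[|[|//]]]] ?] // _; rewrite mxE.
have rA : rbool A = 2.
  by apply/anti_leq; rewrite rbool_A_gt1 andbT -[X in _ <= X]rAx rbool_row_mxl.
by rewrite rAx rAy rA rbool_Axy_gt2.
Qed.
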